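(* Let $S,B\subseteq([-1,1]\cup\{*\})^X$ be real-valued hypothesis classes. For $\eta_1,\eta_2>0$ and $\delta\in(0,1)$, letting $m:=\sup_{r_1,r_2:X\to\mathbb{R}}\mathsf{VC}(S^{(r_1)}_{\eta_1},B^{(r_2)}_{\eta_2})$, \[ \#\mathsf{MC}(S,B,\eta_1\eta_2/3,\delta)\ge\#\mathsf{MA}(S,B,\eta_1\eta_2/3,\delta)\ge\log(1-\delta)+\Omega(m). \] For any $\varepsilon\in(0,1/2)$, taking $\eta_1=\eta_2=\sqrt{3\varepsilon}$, one has $m=\mathsf{fat}_{\sqrt{3\varepsilon}}(S,B)$ and $\#\mathsf{MC}(S,B,\varepsilon,\delta)\ge\#\mathsf{MA}(S,B,\varepsilon,\delta)\ge\log(1-\delta)+\Omega(m)$. Moreover, the constant $3$ may be replaced by any absolute constant $c>2$.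
   Context: $X$ non-empty; distributions discrete. $h^{(r)}_\eta(x)=1$ if $h(x)\ne*$ and $h(x)>r(x)+\eta$, $=-1$ if $h(x)\ne*$ and $h(x)<r(x)-\eta$, $=*$ otherwise; $H^{(r)}_\eta=\{h^{(r)}_\eta:h\in H\}$. $\mathsf{VC}(H_1,H_2)$ for binary classes: sup of $|X'|$ over $X'$ shattered by both. $\mathsf{fat}_\eta(S,B)$: sup of $|X'|$ over $X'$ $\eta$-fat shattered by both $S$ and $B$ (for some $r:X'\to\mathbb{R}$, every $\xi:X'\to\{\pm1\}$ has a member $h$ with $h(x)\ne*$ and $\xi(x)(h(x)-r(x))>\eta$ on $X'$). Generalized product $u_1\diamondsuit u_2=u_1u_2$ if $u_2\in[-1,1]$, $-|u_1|$ if $u_2=*$. $\mathsf{MA\text{-}error}_{\mu,B}(f)=\sup_{b\in B}\sup_{\sigma\in\{\pm1\}}\mathbb{E}_\mu[((f(x)-y)\sigma)\diamondsuit b(x)]$; for $f$ of countable range $V$, $\mathsf{MC\text{-}error}_{\mu,B}(f)=\sup_{b\in B}\sum_{v\in V}\sup_{\sigma}\mathbb{E}_\mu[((f(x)-y)\mathbf{1}(f(x)=v)\sigma)\diamondsuit b(x)]$. $\mathsf{MA}_n(S,B,\varepsilon,\delta)$: learners taking $n$ points of $X\times[-1,1]$ and outputting $f:X\to[-1,1]$ such that for every $\mu$ on $X\times[-1,1]$ with some $s\in S$ satisfying $\Pr_{x\sim\mu|_X}[s(x)\neq*]=1$ and $\mathbb{E}_\mu[y|x]=s(x)$, with probability $\ge1-\delta$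 over $n$ i.i.d. samples, $\mathsf{MA\text{-}error}_{\mu,B}(f)\le\varepsilon$; $\mathsf{MC}_n$ likewise with $\mathsf{MC\text{-}error}$. $\#\mathsf{MA},\#\mathsf{MC}$: least such $n$ ($\infty$ if none). $\log$ is base 2. *)

From Stdlib Require Import Reals List ClassicalDescription.
From Coquelicot Require Import Coquelicot.
Open Scope R_scope.

Definition ind (P : Prop) : R := if excluded_middle_informative P then 1 else 0.

Definition sgnb (b : bool) : R := if b then 1 else -1.

Definition log2 (x : R) : R := ln x / ln 2.

(* partial real-valued hypotheses: None plays the role of the symbol "*" *)
Definition phyp (X : Type) := X -> option R.
Definition hclass (X : Type) := phyp X -> Prop.

Definition valued {X} (H : hclass X) : Prop :=
  forall h, H h -> forall x v, h x = Some v -> -1 <= v <= 1.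

Definition thr {X} (r : X -> R) (eta : R) (h : phyp X) : X -> option bool :=
  fun x => match h x with
           | Some v => if Rlt_dec (r x + eta) v then Some true
                       else if Rlt_dec v (r x - eta) then Some false else None
           | None => None
           end.

Definition thrcls {X} (H : hclass X) (r : X -> R) (eta : R) : (X -> option bool) -> Prop :=
  fun g => exists h, H h /\ g = thr r eta h.

Definition shatters {X} (C : (X -> option bool) -> Prop) (X' : list X) : Prop :=
  forall xi : X -> bool, exists g, C g /\ forall x, In x X' -> g x = Some (xi x).

Definition VC2 {X} (H1 H2 : (X -> option bool) -> Prop) : Rbar :=
  Rbar_lub (fun z => exists X' : list X, NoDup X' /\ shatters H1 X' /\ shatters H2 X'
                       /\ z = Finite (INR (length X'))).

Definition mVC {X} (S B : hclass X) (eta1 eta2 : R) : Rbar :=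
  Rbar_lub (fun z => exists r1 r2 : X -> R, z = VC2 (thrcls S r1 eta1) (thrcls B r2 eta2)).

Definition fat_shatters {X} (H : hclass X) (eta : R) (X' : list X) : Prop :=
  exists r : X -> R, forall xi : X -> bool, exists h, H h /\
    forall x, In x X' -> exists v, h x = Some v /\ sgnb (xi x) * (v - r x) > eta.

Definition fat {X} (eta : R) (S B : hclass X) : Rbar :=
  Rbar_lub (fun z => exists X' : list X, NoDup X' /\ fat_shatters S eta X'
                       /\ fat_shatters B eta X' /\ z = Finite (INR (length X'))).

(* A discrete distribution on X x [-1,1], given by countably many atoms with
   nonnegative weights summing to 1. *)
Record dist (X : Type) := Dist {
  atom : nat -> X * R;
  wt : nat -> R;
  wt_nonneg : forall i, 0 <= wt i;
  wt_sum : is_series wt 1;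
  atom_y : forall i, -1 <= snd (atom i) <= 1 }.
Arguments atom {X}. Arguments wt {X}.

Definition Ex {X} (mu : dist X) (g : X * R -> R) : R :=
  Series (fun i => wt mu i * g (atom mu i)).

Definition realizable {X} (S : hclass X) (mu : dist X) : Prop :=
  exists s, S s /\
    (forall i, 0 < wt mu i -> s (fst (atom mu i)) <> None) /\
    (forall i, 0 < wt mu i -> forall v, s (fst (atom mu i)) = Some v ->
        Series (fun j => wt mu j * ind (fst (atom mu j) = fst (atom mu i))
                          * (snd (atom mu j) - v)) = 0).

Definition diamond (u : R) (b : option R) : R :=
  match b with Some v => u * v | None => - Rabs u end.

Definition MA_err_le {X} (mu : dist X) (B : hclass X) (f : X -> R) (eps : R) : Prop :=
  forall b, B b -> forall sigma : bool,
    Ex mu (fun p => diamond ((f (fst p) - snd p) * sgnb sigma) (b (fst p))) <= eps.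

Definition MC_term {X} (mu : dist X) (b : phyp X) (f : X -> R) (v : R) : R :=
  Rmax (Ex mu (fun p => diamond ((f (fst p) - snd p) * ind (f (fst p) = v) * sgnb true) (b (fst p))))
       (Ex mu (fun p => diamond ((f (fst p) - snd p) * ind (f (fst p) = v) * sgnb false) (b (fst p)))).

(* The sum over v in the range V of f is taken over
   the values f attains on the atoms of mu, each counted once (first occurrence);
   the summands for other v in V vanish identically. *)
Definition MC_err_le {X} (mu : dist X) (B : hclass X) (f : X -> R) (eps : R) : Prop :=
  forall b, B b ->
    Series (fun k => ind (forall j, (j < k)%nat -> f (fst (atom mu j)) <> f (fst (atom mu k)))
                     * MC_term mu b f (f (fst (atom mu k)))) <= eps.

Definition learner (X : Type) := list (X * R) -> (X -> R).

Definition sumR (l : list R) : R := fold_right Rplus 0 l.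
Definition prodR (l : list R) : R := fold_right Rmult 1 l.

(* with probability >= 1 - delta over n i.i.d. samples from mu, good (L sample):
   the probability of the bad event (a countable sum over index tuples) is <= delta,
   i.e. every finite sub-sum is <= delta. *)
Definition whp {X} (mu : dist X) (n : nat) (delta : R) (L : learner X)
    (good : (X -> R) -> Prop) : Prop :=
  forall F : list (list nat), NoDup F -> (forall t, In t F -> length t = n) ->
    sumR (map (fun t => ind (~ good (L (map (atom mu) t))) * prodR (map (wt mu) t)) F)
      <= delta.

Definition outputs_bounded {X} (L : learner X) : Prop :=
  forall smp x, -1 <= L smp x <= 1.

Definition MA_learner {X} (S B : hclass X) (eps delta : R) (n : nat) (L : learner X) : Prop :=
  outputs_bounded L /\
  forall mu : dist X, realizable S mu -> whp mu n delta L (fun f => MA_err_le mu B f eps).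

Definition MC_learner {X} (S B : hclass X) (eps delta : R) (n : nat) (L : learner X) : Prop :=
  outputs_bounded L /\
  (forall smp, exists e : nat -> R, forall x, exists k, L smp x = e k) /\
  forall mu : dist X, realizable S mu -> whp mu n delta L (fun f => MC_err_le mu B f eps).

(* least n (as an extended real; +oo if none) *)
Definition least (P : nat -> Prop) : Rbar :=
  Glb_Rbar (fun r => exists n : nat, P n /\ r = INR n).

Definition sharpMA {X} (S B : hclass X) (eps delta : R) : Rbar :=
  least (fun n => exists L, MA_learner S B eps delta n L).
Definition sharpMC {X} (S B : hclass X) (eps delta : R) : Rbar :=
  least (fun n => exists L, MC_learner S B eps delta n L).

(* An MC-learner is an MA-learner: the MA error splits over the level sets of the predictor,
   and on each level set it is bounded by the corresponding term of the MC error.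

   For the lower bound, let x_1, ..., x_d be shattered by both thresholded classes.  For every
   sign vector beta, some s in S puts v_j := s(x_j) on side beta_j of r1(x_j) with margin eta1;
   the hard distribution for beta has uniform marginal on the x_j and E[y | x_j] = v_j.  Testing
   a predictor f against the two members of B that lie on either side of r2 (with margin eta2)
   following the sign of f - v shows that an (eta1 eta2 / c)-multiaccurate f has the sign of
   f - r1 equal to beta at all but d/c of the points.  A sample is a tuple of n atoms out of 2d,
   of probability at most d^-n under every hard distribution, and the output on a fixed sample
   is that close to at most (1 + tau)^d tau^(-d/c) sign vectors.  Summing the success
   probabilities over all 2^d sign vectors gives
     2^d (1 - delta) <= (2d)^n d^-n (1 + tau)^d tau^(-d/c),
   and taking log2 yields the bound.  For eta1 = eta2, shattering by both thresholded classes
   is fat shattering, whence m = fat. *)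

From Pilot Require Import Defs.
From Stdlib Require Import Reals List Arith Lia Lra Psatz ClassicalDescription Classical.
From Coquelicot Require Import Coquelicot.
(* [Reals] exports its own [ind] and [dist]. *)
Import Defs.
Open Scope R_scope.

Lemma ind_bounds (P : Prop) : 0 <= ind P <= 1.
Proof. unfold ind; destruct excluded_middle_informative; lra. Qed.

Lemma ind_true (P : Prop) : P -> ind P = 1.
Proof. unfold ind; destruct excluded_middle_informative; tauto. Qed.

Lemma ind_false (P : Prop) : ~ P -> ind P = 0.
Proof. unfold ind; destruct excluded_middle_informative; tauto. Qed.

Lemma ind_and (P Q : Prop) : ind (P /\ Q) = ind P * ind Q.
Proof. unfold ind; repeat destruct excluded_middle_informative; tauto || lra. Qed.

Lemma ind_iff (P Q : Prop) : (P <-> Q) -> ind P = ind Q.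
Proof. intros E. unfold ind; repeat destruct excluded_middle_informative; tauto. Qed.

Lemma ind_not (P : Prop) : ind (~ P) = 1 - ind P.
Proof. unfold ind; repeat destruct excluded_middle_informative; tauto || lra. Qed.

(** * Finite sums and Hamming balls *)

Lemma sumR_app (l1 l2 : list R) : sumR (l1 ++ l2) = sumR l1 + sumR l2.
Proof. induction l1 as [|x l1 IH]; simpl; [|rewrite IH]; lra. Qed.

Lemma sumR_map_ext {A} (l : list A) (g h : A -> R) :
  (forall t, In t l -> g t = h t) -> sumR (map g l) = sumR (map h l).
Proof. induction l as [|x l IH]; simpl; intros E; [|rewrite E, IH]; auto. Qed.

Lemma sumR_map_le {A} (l : list A) (g h : A -> R) :
  (forall t, In t l -> g t <= h t) -> sumR (map g l) <= sumR (map h l).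
Proof.
  induction l as [|x l IH]; simpl; intros H; [lra|].
  apply Rplus_le_compat; auto.
Qed.

Lemma sumR_map_plus {A} (l : list A) (g h : A -> R) :
  sumR (map (fun t => g t + h t) l) = sumR (map g l) + sumR (map h l).
Proof. induction l as [|x l IH]; simpl; [|rewrite IH]; lra. Qed.

Lemma sumR_map_minus {A} (l : list A) (g h : A -> R) :
  sumR (map (fun t => g t - h t) l) = sumR (map g l) - sumR (map h l).
Proof. induction l as [|x l IH]; simpl; [|rewrite IH]; lra. Qed.

Lemma sumR_map_scal {A} (l : list A) k (g : A -> R) :
  sumR (map (fun t => k * g t) l) = k * sumR (map g l).
Proof. induction l as [|x l IH]; simpl; [|rewrite IH]; lra. Qed.

Lemma sumR_map_const {A} (l : list A) k : sumR (map (fun _ => k) l) = INR (length l) * k.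
Proof.
  induction l as [|x l IH]; simpl map; simpl length; rewrite ?S_INR; simpl; [|rewrite IH]; lra.
Qed.

Lemma sumR_map_flat_map {A B} (l : list B) (F : B -> list A) (h : A -> R) :
  sumR (map h (flat_map F l)) = sumR (map (fun b => sumR (map h (F b))) l).
Proof. induction l as [|x l IH]; simpl; [|rewrite map_app, sumR_app, IH]; reflexivity. Qed.

Lemma sumR_map_swap {A B} (l : list A) (l' : list B) (G : A -> B -> R) :
  sumR (map (fun a => sumR (map (G a) l')) l)
  = sumR (map (fun b => sumR (map (fun a => G a b) l)) l').
Proof.
  induction l as [|x l IH]; simpl.
  - induction l' as [|y l' IH']; simpl; [|rewrite <- IH']; lra.
  - rewrite IH, <- sumR_map_plus. reflexivity.
Qed.

Definition fsum (N : nat) (a : nat -> R) : R := sumR (map a (seq 0 N)).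

Lemma fsum_S N a : fsum (S N) a = fsum N a + a N.
Proof. unfold fsum. rewrite seq_S, map_app, sumR_app. simpl. lra. Qed.

Lemma fsum_ext N a b : (forall j, (j < N)%nat -> a j = b j) -> fsum N a = fsum N b.
Proof. intros E. apply sumR_map_ext. intros j Hj. apply in_seq in Hj. apply E. lia. Qed.

Lemma fsum_double N a : fsum (2 * N) a = fsum N (fun j => a (2 * j)%nat + a (2 * j + 1)%nat).
Proof.
  induction N as [|N IH]; [reflexivity|].
  replace (2 * S N)%nat with (S (S (2 * N))) by lia.
  rewrite !fsum_S, IH. replace (S (2 * N)) with (2 * N + 1)%nat by lia. lra.
Qed.

Lemma sum_n_fsum a N : sum_n a N = fsum (S N) a.
Proof.
  induction N as [|N IH]; [rewrite sum_O; unfold fsum; simpl; lra|].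
  rewrite sum_Sn, IH, (fsum_S (S N)). reflexivity.
Qed.

Fixpoint tuples (n N : nat) : list (list nat) :=
  match n with
  | O => nil :: nil
  | S n' => flat_map (fun i => map (cons i) (tuples n' N)) (seq 0 N)
  end.

Lemma in_tuples_length n N t : In t (tuples n N) -> length t = n.
Proof.
  revert t; induction n as [|n IH]; simpl; intros t H.
  - destruct H as [<-|[]]; reflexivity.
  - apply in_flat_map in H as [i [_ H]]. apply in_map_iff in H as [t' [<- H]].
    simpl. f_equal. auto.
Qed.

Lemma tuples_length n N : length (tuples n N) = (N ^ n)%nat.
Proof.
  induction n as [|n IH]; simpl; [reflexivity|].
  assert (E : forall l : list nat,
    length (flat_map (fun i => map (cons i) (tuples n N)) l) = (length l * N ^ n)%nat).
  { induction l; simpl; [reflexivity|]. rewrite length_app, length_map, IHl, IH. lia. }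
  rewrite E, length_seq. lia.
Qed.

Lemma NoDup_tuples n N : NoDup (tuples n N).
Proof.
  induction n as [|n IH]; simpl; [repeat constructor; simpl; tauto|].
  enough (H : forall s m, NoDup (flat_map (fun i => map (cons i) (tuples n N)) (seq s m)))
    by apply H.
  intros s m. revert s. induction m as [|m IHm]; intros s; simpl; [constructor|].
  apply NoDup_app.
  - apply NoDup_map_NoDup_ForallPairs; auto. intros x y _ _ E; injection E; auto.
  - apply IHm.
  - intros t H1 H2. apply in_map_iff in H1 as [t1 [<- _]].
    apply in_flat_map in H2 as [i [Hi H2]]. apply in_map_iff in H2 as [t2 [E _]].
    injection E; intros; subst. apply in_seq in Hi. lia.
Qed.

Lemma sumR_tuples_prod n N (w : nat -> R) :
  sumR (map (fun t => prodR (map w t)) (tuples n N)) = fsum N w ^ n.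
Proof.
  induction n as [|n IH]; simpl; [lra|].
  rewrite sumR_map_flat_map, <- IH, Rmult_comm. unfold fsum. rewrite <- sumR_map_scal.
  apply sumR_map_ext. intros i _. rewrite map_map, Rmult_comm, <- sumR_map_scal. reflexivity.
Qed.

Lemma prodR_bounds (w : nat -> R) K t :
  (forall i, 0 <= w i <= K) -> 0 <= prodR (map w t) <= K ^ length t.
Proof.
  intros H. induction t as [|i t IH]; simpl; [lra|].
  specialize (H i). split; [nra|]. apply Rmult_le_compat; lra.
Qed.

Definition upd (beta : nat -> bool) (d : nat) (b : bool) : nat -> bool :=
  fun j => if Nat.eqb j d then b else beta j.

Fixpoint sign_vectors (d : nat) : list (nat -> bool) :=
  match d with
  | O => (fun _ => false) :: nil
  | S d' => map (fun be => upd be d' true) (sign_vectors d')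
            ++ map (fun be => upd be d' false) (sign_vectors d')
  end.

Lemma sign_vectors_length d : length (sign_vectors d) = (2 ^ d)%nat.
Proof. induction d; simpl; [reflexivity|]. rewrite length_app, !length_map, IHd. lia. Qed.

Fixpoint hamming (d : nat) (beta w : nat -> bool) : nat :=
  match d with
  | O => O
  | S d' => (hamming d' beta w + if Bool.eqb (beta d') (w d') then 0 else 1)%nat
  end.

Lemma hamming_ext d b1 b2 w :
  (forall j, (j < d)%nat -> b1 j = b2 j) -> hamming d b1 w = hamming d b2 w.
Proof. induction d; simpl; intros H; [reflexivity|]. rewrite IHd, H; auto. Qed.

Lemma INR_hamming d beta w :
  INR (hamming d beta w) = fsum d (fun j => ind (beta j <> w j)).
Proof.
  induction d as [|d IH]; [reflexivity|]. simpl hamming. rewrite plus_INR, fsum_S, IH.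
  destruct (beta d), (w d); simpl;
    [rewrite ind_false | rewrite ind_true | rewrite ind_true | rewrite ind_false];
    simpl; congruence || lra.
Qed.

Lemma sumR_sign_vectors_pow d w tau :
  sumR (map (fun be => tau ^ hamming d be w) (sign_vectors d)) = (1 + tau) ^ d.
Proof.
  induction d as [|d IH]; simpl; [lra|].
  rewrite map_app, sumR_app, !map_map.
  assert (E : forall b, sumR (map (fun be => tau ^ hamming (S d) (upd be d b) w) (sign_vectors d))
                         = tau ^ (if Bool.eqb b (w d) then 0 else 1) * (1 + tau) ^ d).
  { intros b. rewrite <- IH, <- sumR_map_scal. apply sumR_map_ext. intros be _. simpl hamming.
    rewrite (hamming_ext d (upd be d b) be), pow_add, Rmult_comm.
    - unfold upd. rewrite Nat.eqb_refl. reflexivity.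
    - intros j Hj. unfold upd. destruct (Nat.eqb_spec j d); [lia|reflexivity]. }
  simpl hamming in E. rewrite !E. destruct (w d); simpl; lra.
Qed.

(* Chernoff's trick: [tau^(k - D) >= 1] whenever [k <= D]. *)
Lemma ind_le_pow_div (k : nat) (D tau : R) :
  0 < tau < 1 -> ind (INR k <= D) <= tau ^ k / Rpower tau D.
Proof.
  intros Htau.
  assert (Hln : ln tau < 0) by (rewrite <- ln_1; apply ln_increasing; lra).
  rewrite <- Rpower_pow by lra. unfold Rdiv. rewrite <- Rpower_Ropp, <- Rpower_plus.
  unfold Rpower. pose proof (exp_ineq1_le ((INR k + - D) * ln tau)).
  pose proof (exp_pos ((INR k + - D) * ln tau)).
  destruct (Rle_dec (INR k) D) as [Hk|Hk].
  - rewrite ind_true by exact Hk. nra.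
  - rewrite ind_false by exact Hk. lra.
Qed.

Lemma sumR_hamming_ball_le d w D tau : 0 < tau < 1 ->
  sumR (map (fun be => ind (INR (hamming d be w) <= D)) (sign_vectors d))
  <= (1 + tau) ^ d / Rpower tau D.
Proof.
  intros Htau. unfold Rdiv.
  rewrite <- sumR_sign_vectors_pow with (w := w), Rmult_comm, <- sumR_map_scal.
  apply sumR_map_le. intros be _. rewrite Rmult_comm. apply ind_le_pow_div; auto.
Qed.

Lemma is_series_finite_support (a : nat -> R) N :
  (forall k, (N <= k)%nat -> a k = 0) -> is_series a (fsum N a).
Proof.
  intros H. apply filterlim_ext_loc with (fun _ => fsum N a); [|apply filterlim_const].
  exists N. intros m Hm. rewrite sum_n_fsum.
  induction Hm as [|m Hm IH]; rewrite fsum_S, ?IH, H by lia; lra.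
Qed.

Lemma is_series_le (a b : nat -> R) la lb :
  (forall n, a n <= b n) -> is_series a la -> is_series b lb -> la <= lb.
Proof.
  intros H Ha Hb. apply (is_lim_seq_le (sum_n a) (sum_n b) la lb); auto.
  intros n. apply sum_n_m_le, H.
Qed.

Lemma ex_series_Rabs_le (a b : nat -> R) :
  (forall n, Rabs (a n) <= b n) -> ex_series b -> ex_series (fun n => Rabs (a n)).
Proof.
  intros H Hb. apply (@ex_series_le R_AbsRing R_CompleteNormedModule _ b); auto.
  intros n. change (norm (Rabs (a n))) with (Rabs (Rabs (a n))). rewrite Rabs_Rabsolu. apply H.
Qed.

Lemma Rabs_Series_le (a b : nat -> R) :
  (forall n, Rabs (a n) <= b n) -> ex_series b -> Rabs (Series a) <= Series b.
Proof.
  intros H Hb. eapply Rle_trans; [apply Series_Rabs, (ex_series_Rabs_le a b H Hb)|].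
  apply Series_le; auto. intros n. split; [apply Rabs_pos|apply H].
Qed.

Lemma fsum_Series N (h : nat -> nat -> R) : (forall k, ex_series (h k)) ->
  fsum N (fun k => Series (h k)) = Series (fun i => fsum N (fun k => h k i))
  /\ ex_series (fun i => fsum N (fun k => h k i)).
Proof.
  intros H. induction N as [|N [IH Hex]].
  - pose proof (is_series_finite_support (fun _ => 0) 0 (fun _ _ => eq_refl)) as H0.
    split; [symmetry; apply is_series_unique|eexists]; exact H0.
  - rewrite fsum_S, IH, <- Series_plus by auto.
    split; [apply Series_ext|apply (ex_series_ext (fun i => fsum N (fun k => h k i) + h N i))];
      try (intros; rewrite fsum_S; reflexivity).
    apply (ex_series_plus _ _ Hex (H N)).
Qed.

Lemma Rabs_ind_mul_le (P : Prop) x : Rabs (ind P * x) <= Rabs x.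
Proof.
  pose proof (ind_bounds P). rewrite Rabs_mult, (Rabs_pos_eq (ind P)) by lra.
  pose proof (Rabs_pos x). nra.
Qed.

Lemma fsum_ind_unique N (P : nat -> Prop) : (forall k k', P k -> P k' -> k = k') ->
  fsum N (fun k => ind (P k)) = ind (exists k, (k < N)%nat /\ P k).
Proof.
  intros U. induction N as [|N IH].
  - rewrite ind_false; [reflexivity|]. intros [k [Hk _]]. lia.
  - rewrite fsum_S, IH. destruct (classic (P N)) as [HN|HN].
    + rewrite (ind_false (exists k, (k < N)%nat /\ P k)), !ind_true; [ring|eauto|exact HN|].
      intros [k [Hk Pk]]. specialize (U _ _ HN Pk). lia.
    + rewrite (ind_false (P N)), Rplus_0_r by exact HN. apply ind_iff.
      split; intros [k [Hk Pk]]; exists k; split; auto.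
      destruct (Nat.eq_dec k N); [subst; tauto|lia].
Qed.

Lemma is_lim_seq_Series_tail (b : nat -> R) : ex_series b ->
  is_lim_seq (fun N => Series (fun i => ind (N < i)%nat * b i)) 0.
Proof.
  intros Hb.
  assert (Htail : forall N, Series (fun i => ind (N < i)%nat * b i) = Series b - sum_n b N).
  { intros N.
    assert (Hhead : is_series (fun i => ind (i <= N)%nat * b i) (sum_n b N)).
    { rewrite sum_n_fsum, (fsum_ext _ b (fun i => ind (i <= N)%nat * b i)).
      - apply is_series_finite_support. intros k Hk. rewrite ind_false by lia. ring.
      - intros j Hj. rewrite ind_true by lia. ring. }
    rewrite <- (is_series_unique _ _ Hhead), <- Series_minus by (auto; eexists; exact Hhead).
    apply Series_ext. intros i. destruct (le_lt_dec i N).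
    - rewrite (ind_true (i <= N)%nat), (ind_false (N < i)%nat) by lia. ring.
    - rewrite (ind_false (i <= N)%nat), (ind_true (N < i)%nat) by lia. ring. }
  apply (is_lim_seq_ext (fun N => Series b - sum_n b N)); [intros; symmetry; apply Htail|].
  replace 0 with (Series b - Series b) by ring.
  apply is_lim_seq_minus'; [apply is_lim_seq_const|exact (Series_correct b Hb)].
Qed.

Lemma ex_series_ind_mul (Q : nat -> Prop) (c : nat -> R) :
  ex_series (fun i => Rabs (c i)) -> ex_series (fun i => ind (Q i) * c i).
Proof.
  intros Hc. apply ex_series_Rabs.
  exact (ex_series_Rabs_le _ _ (fun i => Rabs_ind_mul_le (Q i) (c i)) Hc).
Qed.

(* Since every index [i] lies in a class [k <= i], the first [N + 1] classes cover the first
   [N + 1] indices, so the partial sums over classes differ from [Series a] by at most a tail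
   of [Series |a|]. *)
Lemma is_series_partition (a : nat -> R) (P : nat -> nat -> Prop) :
  ex_series (fun i => Rabs (a i)) ->
  (forall i, exists k, (k <= i)%nat /\ P i k) ->
  (forall i k k', P i k -> P i k' -> k = k') ->
  is_series (fun k => Series (fun i => ind (P i k) * a i)) (Series a).
Proof.
  intros Habs Hcover Huniq.
  set (covered := fun N i => ind (exists k, (k < S N)%nat /\ P i k)).
  assert (Hpartial : forall N, sum_n (fun k => Series (fun i => ind (P i k) * a i)) N
                               = Series (fun i => covered N i * a i)).
  { intros N. rewrite sum_n_fsum. destruct (fsum_Series (S N) (fun k i => ind (P i k) * a i))
      as [-> _]; [intros k; apply (ex_series_ind_mul (fun i => P i k)), Habs|].
    apply Series_ext. intros i. unfold covered. rewrite <- fsum_ind_unique by apply Huniq.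
    unfold fsum. rewrite Rmult_comm, <- sumR_map_scal. apply sumR_map_ext. intros; ring. }
  set (tail := fun N => Series (fun i => ind (N < i)%nat * Rabs (a i))).
  assert (Hgap : forall N, Rabs (Series a - Series (fun i => covered N i * a i)) <= tail N).
  { intros N. rewrite <- Series_minus; [|apply ex_series_Rabs, Habs|apply ex_series_ind_mul, Habs].
    apply Rabs_Series_le.
    2:{ apply ex_series_ind_mul. apply (ex_series_ext (fun i => Rabs (a i))); auto.
        intros i. rewrite Rabs_Rabsolu. reflexivity. }
    intros i.
    destruct (le_lt_dec i N) as [Hi|Hi].
    - unfold covered. rewrite ind_true, ind_false by (lia || (destruct (Hcover i) as [k Hk];
        exists k; split; [lia|apply Hk])).
      rewrite Rmult_1_l, Rminus_diag, Rabs_R0. lra.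
    - rewrite ind_true by lia.
      replace (a i - covered N i * a i) with ((1 - covered N i) * a i) by ring.
      unfold covered. rewrite <- ind_not, Rmult_1_l. apply Rabs_ind_mul_le. }
  pose proof (is_lim_seq_Series_tail _ Habs) as Htail. fold tail in Htail.
  enough (H : is_lim_seq (sum_n (fun k => Series (fun i => ind (P i k) * a i))) (Series a))
    by exact H.
  apply (is_lim_seq_le_le (fun N => Series a - tail N) _ (fun N => Series a + tail N)).
  - intros N. rewrite Hpartial. specialize (Hgap N). apply Rabs_le_between in Hgap. lra.
  - pose proof (is_lim_seq_minus' _ _ _ _ (is_lim_seq_const (Series a)) Htail) as H.
    rewrite Rminus_0_r in H. exact H.
  - pose proof (is_lim_seq_plus' _ _ _ _ (is_lim_seq_const (Series a)) Htail) as H.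
    rewrite Rplus_0_r in H. exact H.
Qed.

(** * Multicalibration implies multiaccuracy *)

Lemma diamond_ind u (P : Prop) s ob : diamond (u * ind P * s) ob = ind P * diamond (u * s) ob.
Proof.
  destruct (classic P) as [HP|HP]; [rewrite ind_true by exact HP|rewrite ind_false by exact HP];
    destruct ob; simpl; rewrite ?Rmult_1_r, ?Rmult_0_r, ?Rmult_0_l, ?Rabs_R0; ring.
Qed.

Lemma Rabs_diamond_le u ob :
  (forall v, ob = Some v -> -1 <= v <= 1) -> Rabs (diamond u ob) <= Rabs u.
Proof.
  intros H. destruct ob as [v|]; simpl.
  - specialize (H v eq_refl). rewrite Rabs_mult.
    assert (Rabs v <= 1) by (apply Rabs_le; lra). pose proof (Rabs_pos u). nra.
  - rewrite Rabs_Ropp, Rabs_Rabsolu. lra.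
Qed.

Definition first_occ (F : nat -> R) (k : nat) : Prop := forall j, (j < k)%nat -> F j <> F k.

Lemma first_occ_exists (F : nat -> R) i : exists k, (k <= i)%nat /\ first_occ F k /\ F i = F k.
Proof.
  induction i as [i IH] using lt_wf_ind. destruct (classic (first_occ F i)) as [H|H].
  - exists i. auto.
  - apply not_all_ex_not in H as [j H]. apply imply_to_and in H as [Hj H]. apply NNPP in H.
    destruct (IH j Hj) as [k [Hk [Fk E]]]. exists k. split; [lia|split; [exact Fk|congruence]].
Qed.

Lemma first_occ_unique (F : nat -> R) i k k' :
  first_occ F k /\ F i = F k -> first_occ F k' /\ F i = F k' -> k = k'.
Proof.
  intros [F1 E1] [F2 E2]. destruct (lt_eq_lt_dec k k') as [[L|L]|L]; auto; exfalso.
  - apply (F2 k L). congruence.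
  - apply (F1 k' L). congruence.
Qed.

Lemma is_series_level_sets (w g F : nat -> R) M :
  (forall i, 0 <= w i) -> ex_series w -> (forall i, Rabs (g i) <= M) ->
  is_series (fun k => ind (first_occ F k) * Series (fun i => ind (F i = F k) * (w i * g i)))
            (Series (fun i => w i * g i)).
Proof.
  intros Hw Hws Hg.
  assert (Habs : ex_series (fun i => Rabs (w i * g i))).
  { apply (ex_series_Rabs_le _ (fun i => M * w i)); [|exact (ex_series_scal_l M _ Hws)].
    intros i. specialize (Hg i). specialize (Hw i).
    rewrite Rabs_mult, Rabs_pos_eq by exact Hw. nra. }
  eapply is_series_ext;
    [|apply (is_series_partition _ (fun i k => first_occ F k /\ F i = F k) Habs
               (first_occ_exists F) (first_occ_unique F))].
  intros k. simpl. rewrite <- Series_scal_l. apply Series_ext. intros i. rewrite ind_and. ring.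
Qed.

Lemma MA_err_le_of_MC {X} (mu : dist X) (B : hclass X) f eps :
  valued B -> (forall x, -1 <= f x <= 1) -> MC_err_le mu B f eps -> MA_err_le mu B f eps.
Proof.
  intros HvB Hf HMC b Hb sigma.
  set (F := fun i => f (fst (atom mu i))).
  set (g := fun s i =>
    diamond ((f (fst (atom mu i)) - snd (atom mu i)) * sgnb s) (b (fst (atom mu i)))).
  set (E := fun s k => Series (fun i => ind (F i = F k) * (wt mu i * g s i))).
  set (T := fun k => ind (first_occ F k) * Rmax (E true k) (E false k)).
  assert (Hw : forall i, 0 <= wt mu i) by apply wt_nonneg.
  assert (Hws : ex_series (wt mu)) by (exists 1; apply wt_sum).
  assert (Hg : forall s i, Rabs (g s i) <= 2).
  { intros s i. unfold g. eapply Rle_trans; [apply Rabs_diamond_le; intros v; apply (HvB b Hb)|].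
    rewrite Rabs_mult.
    replace (Rabs (sgnb s)) with 1 by (destruct s; simpl; rewrite ?Rabs_R1, ?Rabs_m1; auto).
    rewrite Rmult_1_r. pose proof (atom_y _ mu i). specialize (Hf (fst (atom mu i))).
    apply Rabs_le. lra. }
  assert (HT : ex_series T).
  { assert (Hone : forall i : nat, Rabs 1 <= 1) by (intros; rewrite Rabs_R1; lra).
    set (mass := fun k => Series (fun i => ind (F i = F k) * (wt mu i * 1))).
    apply ex_series_Rabs, (ex_series_Rabs_le _ (fun k => 2 * (ind (first_occ F k) * mass k))).
    2:{ exact (ex_series_scal_l 2 _ (ex_intro _ _ (is_series_level_sets _ _ F 1 Hw Hws Hone))). }
    intros k.
    assert (HE : forall s, Rabs (E s k) <= 2 * mass k).
    { intros s. unfold mass. rewrite <- Series_scal_l. apply Rabs_Series_le.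
      - intros i. specialize (Hg s i). specialize (Hw i). pose proof (ind_bounds (F i = F k)).
        rewrite !Rabs_mult, (Rabs_pos_eq (ind _)), (Rabs_pos_eq (wt mu i)) by lra.
        assert (0 <= ind (F i = F k) * wt mu i) by nra. nra.
      - refine (ex_series_scal_l 2 _ (ex_series_ind_mul _ _ _)).
        apply (ex_series_ext (wt mu)); [intros i; rewrite Rmult_1_r, Rabs_pos_eq; auto|exact Hws]. }
    unfold T. rewrite Rabs_mult, (Rabs_pos_eq (ind _)) by apply ind_bounds.
    pose proof (ind_bounds (first_occ F k)).
    assert (Rabs (Rmax (E true k) (E false k)) <= 2 * mass k)
      by (unfold Rmax; destruct Rle_dec; apply HE).
    nra. }
  eapply Rle_trans; [|apply (HMC b Hb)].
  eapply (is_series_le _ T); [|apply (is_series_level_sets _ (g sigma) F 2 Hw Hws (Hg sigma))|].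
  - intros k. apply Rmult_le_compat_l; [apply ind_bounds|].
    destruct sigma; [apply Rmax_l|apply Rmax_r].
  - replace (Series _) with (Series T); [apply Series_correct, HT|].
    apply Series_ext. intros k. unfold T. f_equal. unfold MC_term, E, Ex.
    f_equal; apply Series_ext; intros i; rewrite diamond_ind; unfold g, F; ring.
Qed.

Lemma MA_learner_of_MC {X} (S B : hclass X) eps delta n L :
  valued B -> MC_learner S B eps delta n L -> MA_learner S B eps delta n L.
Proof.
  intros HvB [Hbnd [_ HMC]]. split; auto. intros mu Hr F HF Hl.
  eapply Rle_trans; [|apply (HMC mu Hr F HF Hl)]. apply sumR_map_le. intros t _.
  apply Rmult_le_compat_r.
  - induction t as [|i t IH]; simpl; [lra|]. pose proof (wt_nonneg _ mu i). nra.
  - destruct (classic (MC_err_le mu B (L (map (atom mu) t)) eps)) as [H|H].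
    + rewrite (ind_false (~ MA_err_le _ _ _ _)); [apply ind_bounds|].
      intros HMA. apply HMA, MA_err_le_of_MC; auto.
    + rewrite (ind_true (~ MC_err_le _ _ _ _)) by exact H. apply ind_bounds.
Qed.

Lemma thr_Some {X} r eta (h : phyp X) x b :
  thr r eta h x = Some b -> exists u, h x = Some u /\ sgnb b * (u - r x) > eta.
Proof.
  unfold thr. destruct (h x) as [u|]; [|discriminate].
  destruct (Rlt_dec (r x + eta) u); intros E;
    [|destruct (Rlt_dec u (r x - eta)); [|discriminate]];
    injection E as <-; exists u; simpl; split; auto; lra.
Qed.

Lemma thr_of_margin {X} r eta (h : phyp X) x b u : 0 < eta ->
  h x = Some u -> sgnb b * (u - r x) > eta -> thr r eta h x = Some b.
Proof.
  intros Heta E M. unfold thr. rewrite E.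
  destruct b; simpl in M; destruct (Rlt_dec (r x + eta) u); try destruct (Rlt_dec u (r x - eta));
    reflexivity || lra.
Qed.

Lemma shatters_thrcls_iff {X} (H : hclass X) r eta (l : list X) : 0 < eta ->
  shatters (thrcls H r eta) l <->
  forall xi : X -> bool, exists h, H h /\
    forall x, In x l -> exists v, h x = Some v /\ sgnb (xi x) * (v - r x) > eta.
Proof.
  intros Heta. split; intros Hs xi.
  - destruct (Hs xi) as [g [[h [Hh ->]] Hg]]. exists h. split; auto.
    intros x Hx. apply thr_Some, Hg, Hx.
  - destruct (Hs xi) as [h [Hh Hx]]. exists (thr r eta h). split; [exists h; auto|].
    intros x Hin. destruct (Hx x Hin) as [v [E M]]. eapply thr_of_margin; eauto.
Qed.

Lemma shatters_nth {X} (C : (X -> option bool) -> Prop) (x0 : X) l (z : nat -> bool) :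
  NoDup l -> shatters C l ->
  exists g, C g /\ forall j, (j < length l)%nat -> g (nth j l x0) = Some (z j).
Proof.
  intros Hnd Hs.
  set (xi := fun x => if excluded_middle_informative
               (exists j, (j < length l)%nat /\ nth j l x0 = x /\ z j = true) then true else false).
  destruct (Hs xi) as [g [Hg Hgx]]. exists g. split; auto. intros j Hj.
  rewrite Hgx by (apply nth_In; exact Hj). f_equal. unfold xi.
  destruct excluded_middle_informative as [[k [Hk [E Z]]]|N].
  - apply NoDup_nth in E; auto. subst. auto.
  - destruct (z j) eqn:Z; auto. exfalso. apply N. eauto.
Qed.

Lemma shatters_thrcls_nth {X} (H : hclass X) r eta (x0 : X) l (z : nat -> bool) :
  NoDup l -> shatters (thrcls H r eta) l ->
  exists h (U : nat -> R), H h /\ forall j, (j < length l)%nat ->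
    h (nth j l x0) = Some (U j) /\ sgnb (z j) * (U j - r (nth j l x0)) > eta.
Proof.
  intros Hnd Hs. destruct (shatters_nth _ x0 l z Hnd Hs) as [g [[h [Hh ->]] Hg]].
  exists h, (fun j => match h (nth j l x0) with Some u => u | None => 0 end). split; auto.
  intros j Hj. destruct (thr_Some _ _ _ _ _ (Hg j Hj)) as [u [E M]]. rewrite E. auto.
Qed.

Lemma Rbar_lub_ub (E : Rbar -> Prop) x : E x -> Rbar_le x (Rbar_lub E).
Proof. intros H. apply (proj1 (proj2_sig (Rbar_ex_lub E))), H. Qed.

Lemma Rbar_lub_le (E : Rbar -> Prop) b : (forall x, E x -> Rbar_le x b) -> Rbar_le (Rbar_lub E) b.
Proof. intros H. apply (proj2 (proj2_sig (Rbar_ex_lub E))). exact H. Qed.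

Lemma mVC_diag_eq_fat {X} (S B : hclass X) eta : 0 < eta -> mVC S B eta eta = fat eta S B.
Proof.
  intros Heta. apply Rbar_le_antisym.
  - apply Rbar_lub_le. intros z [r1 [r2 ->]]. apply Rbar_lub_le. intros y [l [Hnd [HS [HB ->]]]].
    apply Rbar_lub_ub. exists l. repeat split; auto;
      [exists r1; apply (shatters_thrcls_iff S) | exists r2; apply (shatters_thrcls_iff B)]; auto.
  - apply Rbar_lub_le. intros y [l [Hnd [[r1 HS] [[r2 HB] ->]]]].
    apply Rbar_le_trans with (VC2 (thrcls S r1 eta) (thrcls B r2 eta)); apply Rbar_lub_ub.
    + exists l. repeat split; auto; apply shatters_thrcls_iff; auto.
    + exists r1, r2. reflexivity.
Qed.

(** * The hard distributions *)

(* Atom [2j] is [(x_j, 1)] and atom [2j+1] is [(x_j, -1)], with weights [(1 +- v_j)/(2d)], so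
   that [E[y | x_j] = v_j] under the uniform marginal on the [d] points [x_j]. *)
Definition two_point_atom {X} (x0 : X) (l : list X) (i : nat) : X * R :=
  (nth (Nat.div2 i) l x0, sgnb (Nat.even i)).

Definition two_point_wt (d : nat) (v : nat -> R) (i : nat) : R :=
  if Nat.ltb i (2 * d) then (1 + sgnb (Nat.even i) * v (Nat.div2 i)) / (2 * INR d) else 0.

Lemma two_point_atom_y {X} (x0 : X) l i : -1 <= snd (two_point_atom x0 l i) <= 1.
Proof. unfold two_point_atom. destruct (Nat.even i); simpl; lra. Qed.

Lemma div2_lt_of_lt_double i d : (i < 2 * d)%nat -> (Nat.div2 i < d)%nat.
Proof. intros H. rewrite Nat.div2_div. apply Nat.Div0.div_lt_upper_bound. lia. Qed.

Section TwoPoint.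
Variables (d : nat) (v : nat -> R).

Lemma two_point_wt_even j : (j < d)%nat -> two_point_wt d v (2 * j) = (1 + v j) / (2 * INR d).
Proof.
  intros Hj. unfold two_point_wt. destruct (Nat.ltb_spec (2 * j) (2 * d)); [|lia].
  rewrite Nat.div2_double, Nat.even_even. simpl. rewrite Rmult_1_l. reflexivity.
Qed.

Lemma two_point_wt_odd j : (j < d)%nat -> two_point_wt d v (2 * j + 1) = (1 - v j) / (2 * INR d).
Proof.
  intros Hj. unfold two_point_wt. destruct (Nat.ltb_spec (2 * j + 1) (2 * d)); [|lia].
  rewrite Nat.div2_odd', Nat.even_odd. simpl. replace (1 + -1 * v j) with (1 - v j) by ring.
  reflexivity.
Qed.

Lemma two_point_wt_out i : (2 * d <= i)%nat -> two_point_wt d v i = 0.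
Proof. intros Hi. unfold two_point_wt. destruct (Nat.ltb_spec i (2 * d)); [lia|reflexivity]. Qed.

Lemma two_point_wt_bounds : (0 < d)%nat -> (forall j, (j < d)%nat -> -1 <= v j <= 1) ->
  forall i, 0 <= two_point_wt d v i <= / INR d.
Proof.
  intros Hd Hv i.
  assert (HdR : 0 < INR d) by (apply lt_0_INR; exact Hd).
  unfold two_point_wt. destruct (Nat.ltb_spec i (2 * d)) as [Hi|_];
    [|split; [lra|left; apply Rinv_0_lt_compat, HdR]].
  replace (/ INR d) with (2 / (2 * INR d)) by (field; lra). unfold Rdiv.
  specialize (Hv _ (div2_lt_of_lt_double _ _ Hi)). pose proof (Rinv_0_lt_compat (2 * INR d)).
  destruct (Nat.even i); simpl; split; apply Rmult_le_compat_r || apply Rmult_le_pos; nra.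
Qed.

Lemma fsum_pairs_two_point (g : nat -> R) :
  fsum (2 * d) (fun i => two_point_wt d v i * g i)
  = fsum d (fun j => ((1 + v j) * g (2 * j)%nat + (1 - v j) * g (2 * j + 1)%nat) / (2 * INR d)).
Proof.
  rewrite fsum_double. apply fsum_ext. intros j Hj.
  rewrite two_point_wt_even, two_point_wt_odd by exact Hj. field. apply not_0_INR. lia.
Qed.

Lemma is_series_two_point_wt : (0 < d)%nat -> is_series (two_point_wt d v) 1.
Proof.
  intros Hd.
  assert (HdR : 0 < INR d) by (apply lt_0_INR; exact Hd).
  replace 1 with (fsum (2 * d) (fun i => two_point_wt d v i * 1)).
  - apply (is_series_ext (fun i => two_point_wt d v i * 1)); [intros; apply Rmult_1_r|].
    apply is_series_finite_support. intros k Hk. rewrite two_point_wt_out by exact Hk. ring.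
  - rewrite fsum_pairs_two_point, (fsum_ext _ _ (fun _ => 1 / INR d)).
    + unfold fsum. rewrite sumR_map_const, length_seq. field. lra.
    + intros j _. field. lra.
Qed.

End TwoPoint.

Definition two_point_dist {X} (x0 : X) (l : list X) (v : nat -> R)
    (Hd : (0 < length l)%nat) (Hv : forall j, (j < length l)%nat -> -1 <= v j <= 1) : dist X :=
  Dist X (two_point_atom x0 l) (two_point_wt (length l) v)
    (fun i => proj1 (two_point_wt_bounds _ _ Hd Hv i)) (is_series_two_point_wt _ _ Hd)
    (two_point_atom_y x0 l).

Definition sign_pattern {X} (r : X -> R) (x0 : X) (l : list X) (f : X -> R) (j : nat) : bool :=
  if Rlt_dec (r (nth j l x0)) (f (nth j l x0)) then true else false.

(* [U1 - U2] exceeds [2 e2] and has the sign of [f - v]; if [b] disagrees with the side of [r1]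
   on which [f] lies, then [v] lies beyond [r1] by [e1] on the other side, so [|f - v| > e1]. *)
Lemma margin_product_le (r1 f v e1 r2 e2 U1 U2 : R) (b : bool) :
  0 < e1 -> 0 < e2 -> sgnb b * (v - r1) > e1 ->
  sgnb (if Rlt_dec v f then true else false) * (U1 - r2) > e2 ->
  sgnb (negb (if Rlt_dec v f then true else false)) * (U2 - r2) > e2 ->
  2 * e1 * e2 * ind (b <> if Rlt_dec r1 f then true else false) <= (U1 - U2) * (f - v).
Proof.
  intros He1 He2 Hb H1 H2.
  destruct (Rlt_dec v f), (Rlt_dec r1 f), b; simpl in *;
    (rewrite ind_false by congruence) || (rewrite ind_true by congruence); nra.
Qed.

Section HardDistribution.
Variables (X : Type) (x0 : X) (l : list X) (v : nat -> R).
Hypothesis (Hd : (0 < length l)%nat) (Hv : forall j, (j < length l)%nat -> -1 <= v j <= 1).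

Let mu := two_point_dist x0 l v Hd Hv.

Lemma Ex_two_point (g : X * R -> R) :
  Ex mu g = fsum (length l) (fun j =>
    ((1 + v j) * g (nth j l x0, 1) + (1 - v j) * g (nth j l x0, -1)) / (2 * INR (length l))).
Proof.
  assert (Hout : forall k, (2 * length l <= k)%nat ->
                 two_point_wt (length l) v k * g (two_point_atom x0 l k) = 0)
    by (intros k Hk; rewrite two_point_wt_out by exact Hk; ring).
  unfold Ex. simpl. rewrite (is_series_unique _ _ (is_series_finite_support _ _ Hout)).
  rewrite fsum_pairs_two_point. apply fsum_ext. intros j _. unfold two_point_atom.
  rewrite Nat.div2_double, Nat.div2_odd', Nat.even_even, Nat.even_odd. reflexivity.
Qed.

Lemma Ex_two_point_diamond (b : phyp X) (U : nat -> R) (f : X -> R) sigma :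
  (forall j, (j < length l)%nat -> b (nth j l x0) = Some (U j)) ->
  Ex mu (fun p => diamond ((f (fst p) - snd p) * sgnb sigma) (b (fst p)))
  = fsum (length l) (fun j => sgnb sigma * U j * (f (nth j l x0) - v j) / INR (length l)).
Proof.
  intros HU. rewrite Ex_two_point. apply fsum_ext. intros j Hj. simpl. rewrite HU by exact Hj.
  simpl. field. apply not_0_INR. lia.
Qed.

Lemma two_point_realizable (S : hclass X) s : S s ->
  (forall j, (j < length l)%nat -> s (nth j l x0) = Some (v j)) -> realizable S mu.
Proof.
  intros Hs Hsv. exists s. split; [exact Hs|].
  assert (Hsupp : forall i, 0 < wt mu i ->
            fst (atom mu i) = nth (Nat.div2 i) l x0 /\ (Nat.div2 i < length l)%nat).
  { intros i Hi. split; [reflexivity|]. apply div2_lt_of_lt_double.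
    destruct (Nat.ltb_spec i (2 * length l)); [lia|].
    simpl in Hi. rewrite two_point_wt_out in Hi by lia. lra. }
  split.
  - intros i Hi. destruct (Hsupp i Hi) as [-> Hk]. rewrite Hsv by exact Hk. discriminate.
  - intros i Hi u Hu. destruct (Hsupp i Hi) as [Exi Hk]. rewrite Exi in *.
    rewrite Hsv in Hu by exact Hk. injection Hu as <-.
    transitivity (Ex mu (fun p => ind (fst p = nth (Nat.div2 i) l x0) * (snd p - v (Nat.div2 i)))).
    { unfold Ex. apply Series_ext. intros j. ring. }
    rewrite Ex_two_point, (fsum_ext _ _ (fun _ => 0)); [unfold fsum; rewrite sumR_map_const; ring|].
    intros j Hj. simpl.
    destruct (classic (nth j l x0 = nth (Nat.div2 i) l x0)) as [E|E].
    + rewrite ind_true by exact E.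
      assert (v j = v (Nat.div2 i)) as Evj.
      { pose proof (Hsv j Hj) as H1. rewrite E, Hsv in H1 by exact Hk. congruence. }
      rewrite Evj. field. apply not_0_INR. lia.
    + rewrite ind_false by exact E. field. apply not_0_INR. lia.
Qed.

Lemma hamming_le_of_MA_err_le (B : hclass X) (r1 r2 : X -> R) e1 e2 (beta : nat -> bool) f eps :
  0 < e1 -> 0 < e2 -> NoDup l -> shatters (thrcls B r2 e2) l ->
  (forall j, (j < length l)%nat -> sgnb (beta j) * (v j - r1 (nth j l x0)) > e1) ->
  MA_err_le mu B f eps ->
  e1 * e2 * INR (hamming (length l) beta (sign_pattern r1 x0 l f)) <= INR (length l) * eps.
Proof.
  intros He1 He2 Hnd HshB Hbeta HMA.
  assert (HdR : 0 < INR (length l)) by (apply lt_0_INR; exact Hd).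
  set (z := fun j => if Rlt_dec (v j) (f (nth j l x0)) then true else false).
  destruct (shatters_thrcls_nth B r2 e2 x0 l z Hnd HshB) as [b1 [U1 [Hb1 H1]]].
  destruct (shatters_thrcls_nth B r2 e2 x0 l (fun j => negb (z j)) Hnd HshB) as [b2 [U2 [Hb2 H2]]].
  pose proof (HMA b1 Hb1 true) as E1. pose proof (HMA b2 Hb2 false) as E2.
  rewrite (Ex_two_point_diamond b1 U1) in E1 by (intros j Hj; apply H1, Hj).
  rewrite (Ex_two_point_diamond b2 U2) in E2 by (intros j Hj; apply H2, Hj).
  assert (Hsum : 2 * e1 * e2 / INR (length l)
                 * INR (hamming (length l) beta (sign_pattern r1 x0 l f))
                 <= eps + eps).
  { eapply Rle_trans; [|apply Rplus_le_compat; [exact E1|exact E2]].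
    rewrite INR_hamming. unfold fsum. rewrite <- sumR_map_scal, <- sumR_map_plus.
    apply sumR_map_le. intros j Hj. apply in_seq in Hj. destruct Hj as [_ Hj]. simpl in Hj.
    destruct (H1 j Hj) as [_ M1], (H2 j Hj) as [_ M2].
    pose proof (margin_product_le _ _ _ _ _ _ (U1 j) (U2 j) _ He1 He2 (Hbeta j Hj) M1 M2) as M.
    unfold sign_pattern. simpl sgnb.
    apply Rmult_le_compat_r with (r := / INR (length l)) in M; [|left; apply Rinv_0_lt_compat, HdR].
    unfold Rdiv. lra. }
  apply Rmult_le_reg_l with (2 / INR (length l)); [apply Rdiv_lt_0_compat; lra|].
  replace (2 / INR (length l) * (INR (length l) * eps)) with (eps + eps) by (field; lra).
  unfold Rdiv in *. lra.
Qed.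

End HardDistribution.

(** * The counting argument *)

Lemma fsum_two_point_wt d v : (0 < d)%nat -> fsum (2 * d) (two_point_wt d v) = 1.
Proof.
  intros Hd. rewrite <- (is_series_unique _ _ (is_series_two_point_wt d v Hd)).
  symmetry. apply is_series_unique, is_series_finite_support. intros k. apply two_point_wt_out.
Qed.

Definition learned_pattern {X} (L : learner X) (r : X -> R) (x0 : X) (l : list X) (t : list nat) :=
  sign_pattern r x0 l (L (map (two_point_atom x0 l) t)).

(* A sample is the tuple of indices of its atoms; each tuple has probability at most [d^-n]. *)
Lemma MA_success_mass {X} (S B : hclass X) (x0 : X) l (r1 r2 : X -> R) e1 e2 c delta n
    (L : learner X) (beta : nat -> bool) :
  valued S -> NoDup l -> (0 < length l)%nat -> 0 < e1 -> 0 < e2 -> 0 < c ->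
  shatters (thrcls S r1 e1) l -> shatters (thrcls B r2 e2) l ->
  MA_learner S B (e1 * e2 / c) delta n L ->
  1 - delta <= sumR (map (fun t =>
    ind (INR (hamming (length l) beta (learned_pattern L r1 x0 l t)) <= INR (length l) / c)
    * / INR (length l) ^ n) (tuples n (2 * length l))).
Proof.
  intros HvS Hnd Hd He1 He2 Hc HshS HshB [_ HL].
  assert (HdR : 0 < INR (length l)) by (apply lt_0_INR; exact Hd).
  destruct (shatters_thrcls_nth S r1 e1 x0 l beta Hnd HshS) as [s [v [Hs Hsv]]].
  assert (Hv : forall j, (j < length l)%nat -> -1 <= v j <= 1)
    by (intros j Hj; apply (HvS s Hs (nth j l x0)), Hsv, Hj).
  set (mu := two_point_dist x0 l v Hd Hv).
  assert (Hreal : realizable S mu) by (apply (two_point_realizable _ _ _ _ _ _ S s); firstorder).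
  specialize (HL mu Hreal (tuples n (2 * length l)) (NoDup_tuples _ _) (in_tuples_length _ _)).
  assert (Hmass : sumR (map (fun t => prodR (map (wt mu) t)) (tuples n (2 * length l))) = 1).
  { rewrite sumR_tuples_prod. change (wt mu) with (two_point_wt (length l) v).
    rewrite fsum_two_point_wt by exact Hd. apply pow1. }
  eapply Rle_trans; [|apply sumR_map_le with
    (g := fun t => prodR (map (wt mu) t)
                   - ind (~ MA_err_le mu B (L (map (atom mu) t)) (e1 * e2 / c))
                     * prodR (map (wt mu) t))].
  { rewrite sumR_map_minus, Hmass. lra. }
  intros t Ht.
  pose proof (prodR_bounds (wt mu) (/ INR (length l)) t (two_point_wt_bounds _ _ Hd Hv)) as Hprod.
  rewrite (in_tuples_length _ _ _ Ht), pow_inv in Hprod.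
  destruct (classic (MA_err_le mu B (L (map (atom mu) t)) (e1 * e2 / c))) as [Hgood|Hbad].
  - assert (Hclose :
      INR (hamming (length l) beta (learned_pattern L r1 x0 l t)) <= INR (length l) / c).
    { apply Rmult_le_reg_l with (e1 * e2); [nra|].
      eapply Rle_trans; [apply (hamming_le_of_MA_err_le _ _ _ _ Hd Hv B r1 r2 e1 e2 beta _ _
        He1 He2 Hnd HshB (fun j Hj => proj2 (Hsv j Hj)) Hgood)|].
      right. field. lra. }
    rewrite (ind_false (~ _)), (ind_true _ Hclose) by tauto. lra.
  - rewrite ind_true by exact Hbad. pose proof (ind_bounds (INR (hamming (length l) beta
      (learned_pattern L r1 x0 l t)) <= INR (length l) / c)).
    assert (0 <= / INR (length l) ^ n)
      by (rewrite <- pow_inv; apply pow_le; left; apply Rinv_0_lt_compat, HdR).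
    nra.
Qed.

Lemma MA_counting_bound {X} (S B : hclass X) (x0 : X) l (r1 r2 : X -> R) e1 e2 c delta n
    (L : learner X) tau :
  valued S -> NoDup l -> (0 < length l)%nat -> 0 < e1 -> 0 < e2 -> 0 < c -> 0 < tau < 1 ->
  shatters (thrcls S r1 e1) l -> shatters (thrcls B r2 e2) l ->
  MA_learner S B (e1 * e2 / c) delta n L ->
  2 ^ length l * (1 - delta) <= 2 ^ n * (1 + tau) ^ length l / Rpower tau (INR (length l) / c).
Proof.
  intros HvS Hnd Hd He1 He2 Hc Htau HshS HshB HL.
  set (d := length l). assert (HdR : 0 < INR d) by (apply lt_0_INR; exact Hd).
  set (close := fun beta t =>
    ind (INR (hamming d beta (learned_pattern L r1 x0 l t)) <= INR d / c)).
  apply Rle_trans with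
    (sumR (map (fun beta => sumR (map (fun t => close beta t * / INR d ^ n) (tuples n (2 * d))))
               (sign_vectors d))).
  { assert (Hcount : sumR (map (fun _ => 1 - delta) (sign_vectors d)) = 2 ^ d * (1 - delta)).
    { rewrite sumR_map_const, sign_vectors_length, pow_INR. simpl (INR 2). do 2 f_equal. }
    rewrite <- Hcount. apply sumR_map_le. intros beta _.
    apply (MA_success_mass S B x0 l r1 r2 e1 e2 c delta n L beta); auto. }
  rewrite sumR_map_swap.
  apply Rle_trans with
    (sumR (map (fun _ => / INR d ^ n * ((1 + tau) ^ d / Rpower tau (INR d / c)))
               (tuples n (2 * d)))).
  { apply sumR_map_le. intros t _.
    erewrite sumR_map_ext by (intros; apply Rmult_comm). rewrite sumR_map_scal.
    apply Rmult_le_compat_l; [rewrite <- pow_inv; apply pow_le; left; apply Rinv_0_lt_compat, HdR|].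
    apply sumR_hamming_ball_le, Htau. }
  rewrite sumR_map_const, tuples_length, pow_INR, mult_INR, Rpow_mult_distr. simpl (INR 2).
  replace (1 + 1) with 2 by ring. right.
  rewrite Rmult_assoc, <- (Rmult_assoc (INR d ^ n)), Rinv_r, Rmult_1_l by (apply pow_nonzero; lra).
  unfold Rdiv. ring.
Qed.

Lemma ln_le_sub_1 x : 0 < x -> ln x <= x - 1.
Proof. intros Hx. pose proof (exp_ineq1_le (ln x)) as H. rewrite exp_ln in H by exact Hx. lra. Qed.

Lemma ln2_pos : 0 < ln 2.
Proof. rewrite <- ln_1. apply ln_increasing; lra. Qed.

Lemma log2_counting_bound (d n : nat) delta tau c :
  0 < delta < 1 -> 0 < tau < 1 -> 0 < c ->
  2 ^ d * (1 - delta) <= 2 ^ n * (1 + tau) ^ d / Rpower tau (INR d / c) ->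
  log2 (1 - delta) + (1 - log2 (1 + tau) + log2 tau / c) * INR d <= INR n.
Proof.
  intros Hdelta Htau Hc H. pose proof ln2_pos.
  apply ln_le in H; [|apply Rmult_lt_0_compat; [apply pow_lt|]; lra].
  rewrite ln_mult, ln_div, ln_mult, !ln_pow, ln_Rpower in H
    by (try apply Rmult_lt_0_compat; try apply pow_lt; try apply exp_pos; lra).
  unfold log2. apply Rmult_le_reg_r with (ln 2); [lra|].
  replace ((ln (1 - delta) / ln 2 + (1 - ln (1 + tau) / ln 2 + ln tau / ln 2 / c) * INR d) * ln 2)
    with (ln (1 - delta) + INR d * ln 2 - INR d * ln (1 + tau) + INR d / c * ln tau)
    by (field; lra).
  lra.
Qed.

(* Any [tau] in [(0,1)] gives a valid bound; [tau = 1/2 + 1/c] makes the constant positive for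
   every [c > 2]. *)
Definition lower_tau (c : R) : R := / 2 + / c.

Definition lower_const (c : R) : R := 1 - log2 (1 + lower_tau c) + log2 (lower_tau c) / c.

Lemma lower_tau_bounds c : 2 < c -> / 2 < lower_tau c < 1.
Proof.
  intros Hc. unfold lower_tau.
  assert (0 < / c < / 2) by (split; [apply Rinv_0_lt_compat|apply Rinv_lt_contravar]; lra).
  lra.
Qed.

Lemma lower_const_pos c : 2 < c -> 0 < lower_const c.
Proof.
  intros Hc. pose proof (lower_tau_bounds c Hc) as Ht. pose proof ln2_pos as Hln2.
  set (t := lower_tau c) in *.
  assert (Hct : c * t = c / 2 + 1) by (unfold t, lower_tau; field; lra).
  assert (H1 : ln (1 + t) <= ln 2 + ((1 + t) / 2 - 1)).
  { replace (1 + t) with (2 * ((1 + t) / 2)) at 1 by field.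
    rewrite ln_mult by lra. assert (Hpos : 0 < (1 + t) / 2) by lra.
    pose proof (ln_le_sub_1 _ Hpos). lra. }
  assert (H2 : 1 - / t <= ln t).
  { assert (Hinv : 0 < / t) by (apply Rinv_0_lt_compat; lra).
    pose proof (ln_le_sub_1 (/ t) Hinv) as Hl. rewrite ln_Rinv in Hl by lra. lra. }
  assert (H3 : (1 - / t) / c = - ((1 - t) / (c * t))) by (field; lra).
  assert (H4 : (1 - t) / (c * t) < (1 - t) / 2).
  { rewrite Hct. apply Rmult_lt_compat_l; [lra|]. apply Rinv_lt_contravar; lra. }
  assert (H5 : (1 - / t) / c <= ln t / c)
    by (apply Rmult_le_compat_r; [left; apply Rinv_0_lt_compat|]; lra).
  unfold lower_const, log2. fold t.
  replace (1 - ln (1 + t) / ln 2 + ln t / ln 2 / c) with ((ln 2 - ln (1 + t) + ln t / c) / ln 2)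
    by (field; lra).
  apply Rdiv_lt_0_compat; lra.
Qed.

Lemma MA_sample_size_ge_shattered {X} (S B : hclass X) (x0 : X) l (r1 r2 : X -> R) e1 e2 c delta n
    (L : learner X) :
  valued S -> NoDup l -> 0 < e1 -> 0 < e2 -> 2 < c -> 0 < delta < 1 ->
  shatters (thrcls S r1 e1) l -> shatters (thrcls B r2 e2) l ->
  MA_learner S B (e1 * e2 / c) delta n L ->
  log2 (1 - delta) + lower_const c * INR (length l) <= INR n.
Proof.
  intros HvS Hnd He1 He2 Hc Hdelta HshS HshB HL.
  destruct (Nat.eq_dec (length l) 0) as [E|Hd].
  - rewrite E, Rmult_0_r, Rplus_0_r. pose proof (pos_INR n). pose proof ln2_pos.
    assert (ln (1 - delta) < 0) by (rewrite <- ln_1; apply ln_increasing; lra).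
    unfold log2. assert (ln (1 - delta) / ln 2 < 0) by (apply Rdiv_neg_pos; lra). lra.
  - pose proof (lower_tau_bounds c Hc).
    apply log2_counting_bound; [lra|lra|lra|].
    apply (MA_counting_bound S B x0 l r1 r2 e1 e2 c delta n L); auto; lia || lra.
Qed.

Lemma least_ge (P : nat -> Prop) (b : Rbar) :
  (forall n, P n -> Rbar_le b (INR n)) -> Rbar_le b (least P).
Proof. intros H. apply (proj2 (Glb_Rbar_correct _)). intros x [n [Pn ->]]. apply H, Pn. Qed.

Lemma least_le_least (P Q : nat -> Prop) : (forall n, Q n -> P n) -> Rbar_le (least P) (least Q).
Proof.
  intros H. apply least_ge. intros n Qn. apply (proj1 (Glb_Rbar_correct _)). exists n. auto.
Qed.

Lemma sharpMA_le_sharpMC {X} (S B : hclass X) eps delta :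
  valued B -> Rbar_le (sharpMA S B eps delta) (sharpMC S B eps delta).
Proof.
  intros HvB. apply least_le_least. intros n [L HL]. exists L. apply MA_learner_of_MC; auto.
Qed.

Lemma Rbar_plus_mult_le (a C y : R) (m : Rbar) :
  0 < C -> Rbar_le m ((y - a) / C) -> Rbar_le (Rbar_plus a (Rbar_mult C m)) y.
Proof.
  intros HC Hm. destruct m as [m| |]; simpl in *.
  - apply Rmult_le_compat_l with (r := C) in Hm; [|lra].
    replace (C * ((y - a) / C)) with (y - a) in Hm by (field; lra). lra.
  - contradiction.
  - unfold Rbar_mult, Rbar_mult'. destruct (Rle_dec 0 C) as [H|H]; [|lra].
    destruct (Rle_lt_or_eq_dec 0 C H); [exact I|lra].
Qed.

Lemma sharpMA_ge {X} (S B : hclass X) (x0 : X) e1 e2 c delta :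
  valued S -> 0 < e1 -> 0 < e2 -> 2 < c -> 0 < delta < 1 ->
  Rbar_le (Rbar_plus (log2 (1 - delta)) (Rbar_mult (lower_const c) (mVC S B e1 e2)))
          (sharpMA S B (e1 * e2 / c) delta).
Proof.
  intros HvS He1 He2 Hc Hdelta. pose proof (lower_const_pos c Hc).
  apply least_ge. intros n [L HL]. apply Rbar_plus_mult_le; auto.
  apply Rbar_lub_le. intros z [r1 [r2 ->]]. apply Rbar_lub_le. intros y [l [Hnd [HS [HB ->]]]].
  simpl. apply Rmult_le_reg_l with (lower_const c); auto.
  replace (lower_const c * ((INR n - log2 (1 - delta)) / lower_const c))
    with (INR n - log2 (1 - delta)) by (field; lra).
  pose proof (MA_sample_size_ge_shattered S B x0 l r1 r2 e1 e2 c delta n L). intuition lra.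
Qed.

Theorem theorem5p5 :
  forall c : R, 2 < c ->
  exists C : R, 0 < C /\
  (forall (X : Type) (S B : hclass X), inhabited X -> valued S -> valued B ->
   forall eta1 eta2 delta : R, 0 < eta1 -> 0 < eta2 -> 0 < delta < 1 ->
     Rbar_le (sharpMA S B (eta1 * eta2 / c) delta) (sharpMC S B (eta1 * eta2 / c) delta) /\
     Rbar_le (Rbar_plus (Finite (log2 (1 - delta))) (Rbar_mult (Finite C) (mVC S B eta1 eta2)))
             (sharpMA S B (eta1 * eta2 / c) delta)) /\
  (forall (X : Type) (S B : hclass X), inhabited X -> valued S -> valued B ->
   forall eps delta : R, 0 < eps < 1/2 -> 0 < delta < 1 ->
     mVC S B (sqrt (c * eps)) (sqrt (c * eps)) = fat (sqrt (c * eps)) S B /\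
     Rbar_le (sharpMA S B eps delta) (sharpMC S B eps delta) /\
     Rbar_le (Rbar_plus (Finite (log2 (1 - delta)))
                        (Rbar_mult (Finite C) (mVC S B (sqrt (c * eps)) (sqrt (c * eps)))))
             (sharpMA S B eps delta)).
Proof.
  intros c Hc. exists (lower_const c). split; [apply lower_const_pos, Hc|]. split.
  - intros X S B [x0] HvS HvB e1 e2 delta He1 He2 Hdelta.
    split; [apply sharpMA_le_sharpMC, HvB|apply sharpMA_ge; auto].
  - intros X S B [x0] HvS HvB eps delta Heps Hdelta.
    assert (Heta : 0 < sqrt (c * eps)) by (apply sqrt_lt_R0; nra).
    assert (Heta2 : sqrt (c * eps) * sqrt (c * eps) / c = eps)
      by (rewrite sqrt_sqrt by nra; field; lra).
    pose proof (sharpMA_ge S B x0 _ _ c delta HvS Heta Heta Hc Hdelta) as Hlower.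
    rewrite Heta2 in Hlower.
    split; [apply mVC_diag_eq_fat, Heta|split; [apply sharpMA_le_sharpMC, HvB|exact Hlower]].
Qed.
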